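(* Let $(H,B_1,B_2)$ be a Rota-Baxter system of Hopf algebras, $A$ a unital commutative algebra, and $\mathcal{B}_1,\mathcal{B}_2:\mathrm{Char}(H,A)\to\mathrm{Char}(H_{B_1,B_2},A)$ given by $\mathcal{B}_i(f)(a)=f(B_i(a))$, $a\in H_1$. The Cayley transform $\Theta:\operatorname{Im}(\mathcal{B}_1)/\mathcal{B}_1(\ker\mathcal{B}_2)\to\operatorname{Im}(\mathcal{B}_2)/\mathcal{B}_2(\ker\mathcal{B}_1)$, $\Theta(\overline{\mathcal{B}_1(f)})=\overline{\mathcal{B}_2(f)}$ for $f\in\mathrm{Char}(H,A)$, is a group isomorphism.
   Context: $\mathbb{F}$ is a field of characteristic $0$; Sweedler notation $\Delta(a)=a_1\otimes a_2$. A Rota-Baxter system of Hopf algebras is a triple $(H,B_1,B_2)$ with $(H,\cdot,1,\Delta,\epsilon,S)$ a cocommutative Hopf algebra, $B_1,B_2$ coalgebra homomorphisms with $B_1(1)=B_2(1)=1$, and for all $a,b\in H$: $B_1(a)B_1(b)=B_1(B_1(a_1)bS(B_2(a_2)))$, $B_2(a)B_2(b)=B_2(B_1(a_1)bS(B_2(a_2)))$. Descendent operation $a\circ b=B_1(a_1)bS(B_2(a_2))$, cocycle $\sigma(a)=B_1(a_1)S(B_2(a_2))$, $H_1=\operatorname{Im}(\sigma)$; $H_{B_1,B_2}$ is the Hopf algebra $H_1$ with product $\circ$, unit $1$, restricted $\Delta,\epsilon$, antipode $T(a)=S(B_1(a_1))B_2(a_2)$. Convolution: $(f\ast g)(a)=f(a_1)g(a_2)$.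 $\mathrm{Char}(H,A)$ is the group under $\ast$ of algebra homomorphisms $H\to A$; $\mathrm{Char}(H_{B_1,B_2},A)$ is the group under convolution (w.r.t. the coproduct of $H_1$) of algebra homomorphisms $(H_1,\circ,1)\to A$. The subgroups $\mathcal{B}_1(\ker\mathcal{B}_2)\trianglelefteq\operatorname{Im}(\mathcal{B}_1)$ and $\mathcal{B}_2(\ker\mathcal{B}_1)\trianglelefteq\operatorname{Im}(\mathcal{B}_2)$ are normal, and bars denote cosets. *)

From HB Require Import structures.
From mathcomp Require Import all_boot all_order all_algebra.
Set Implicit Arguments. Unset Strict Implicit. Unset Printing Implicit Defensive.
Import GRing.Theory.
Local Open Scope ring_scope.

Section Hopf.
Variables (F : fieldType) (H : algType F).

(* The coproduct Delta(a) is represented by a finite list of pairs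
   [(a1_i, a2_i)] standing for the tensor sum_i a1_i (x) a2_i in H (x) H.
   Such a representative is only relevant up to the universal property of
   the tensor product: every axiom / definition only uses Delta(a) through
   bilinear maps H -> H -> W. *)
Record hopf_data := HopfData {
  cop : H -> seq (H * H);
  cou : H -> F;
  ant : H -> H }.

Variable D : hopf_data.

(* Sweedler notation: sw a phi = phi(a_1, a_2) = sum phi a_1 a_2. *)
Definition sw (W : zmodType) (a : H) (phi : H -> H -> W) : W :=
  \sum_(p <- cop D a) phi p.1 p.2.

Definition lin (U V : lmodType F) (f : U -> V) : Prop :=
  forall (k : F) (x y : U), f (k *: x + y) = k *: f x + f y.

Definition bilin (W : lmodType F) (phi : H -> H -> W) : Prop :=
  (forall y, lin (fun x => phi x y)) /\ (forall x, lin (phi x)).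

Definition trilin (W : lmodType F) (phi : H -> H -> H -> W) : Prop :=
  (forall y z, lin (fun x => phi x y z)) /\ (forall x z, lin (fun y => phi x y z))
  /\ (forall x y, lin (phi x y)).

Definition cocomm_hopf : Prop :=
      (forall (W : lmodType F) (phi : H -> H -> W), bilin phi ->
         forall k a b, sw (k *: a + b) phi = k *: sw a phi + sw b phi) /\
      (forall k a b, cou D (k *: a + b) = k * cou D a + cou D b) /\
      lin (ant D) /\
      (forall (W : lmodType F) (phi : H -> H -> H -> W), trilin phi ->
         forall a, sw a (fun x y => sw x (fun x1 x2 => phi x1 x2 y))
                 = sw a (fun x y => sw y (fun y1 y2 => phi x y1 y2))) /\
      (forall a, sw a (fun x y => cou D x *: y) = a /\ sw a (fun x y => cou D y *: x) = a) /\
      (forall (W : lmodType F) (phi : H -> H -> W), bilin phi ->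
         (forall a b, sw (a * b) phi = sw a (fun x y => sw b (fun x' y' => phi (x * x') (y * y'))))
         /\ sw 1 phi = phi 1 1) /\
      ((forall a b, cou D (a * b) = cou D a * cou D b) /\ cou D 1 = 1) /\
      (forall a, sw a (fun x y => ant D x * y) = cou D a *: 1
              /\ sw a (fun x y => x * ant D y) = cou D a *: 1) /\
      (forall (W : lmodType F) (phi : H -> H -> W), bilin phi ->
         forall a, sw a phi = sw a (fun x y => phi y x)).

Definition coalg_hom (B : H -> H) : Prop :=
  [/\ lin B,
      (forall (W : lmodType F) (phi : H -> H -> W), bilin phi ->
         forall a, sw (B a) phi = sw a (fun x y => phi (B x) (B y))),
      (forall a, cou D (B a) = cou D a) & B 1 = 1].

Variables B1 B2 : H -> H.

Definition circ (a b : H) : H := sw a (fun x y => B1 x * b * ant D (B2 y)).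

Definition rb_system : Prop :=
  [/\ coalg_hom B1, coalg_hom B2,
      (forall a b, B1 a * B1 b = B1 (circ a b)) &
      (forall a b, B2 a * B2 b = B2 (circ a b))].

Definition sigma (a : H) : H := sw a (fun x y => B1 x * ant D (B2 y)).
Definition inH1 (x : H) : Prop := exists b, x = sigma b.

Variable A : comAlgType F.

Definition is_char (f : H -> A) : Prop :=
  [/\ lin f, (forall a b, f (a * b) = f a * f b) & f 1 = 1].

Definition conv (f g : H -> A) (a : H) : A := sw a (fun x y => f x * g y).

Definition conv_unit (a : H) : A := cou D a *: 1.

(* equality of maps as elements of Char(H_{B1,B2},A), i.e. on H1 *)
Definition eqH1 (x y : H -> A) : Prop := forall a, inH1 a -> x a = y a.

Definition calB (B : H -> H) (f : H -> A) : H -> A := fun a => f (B a).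

Definition in_ker_calB (B : H -> H) (f : H -> A) : Prop :=
  is_char f /\ eqH1 (calB B f) conv_unit.

(* x and y (elements of Im calB_i) lie in the same left coset of
   calB_i(ker calB_j):  x = y * calB_i(k) with k in ker calB_j *)
Definition same_coset (Bi Bj : H -> H) (x y : H -> A) : Prop :=
  exists k, in_ker_calB Bj k /\ eqH1 x (conv y (calB Bi k)).

End Hopf.

From Pilot Require Import Defs.
From HB Require Import structures.
From mathcomp Require Import all_boot all_order all_algebra.
From Stdlib Require Import FunctionalExtensionality.
Set Implicit Arguments. Unset Strict Implicit. Unset Printing Implicit Defensive.
Import GRing.Theory.
Local Open Scope ring_scope.

(* Characters [H -> A] form a group under convolution, the inverse of [g] being
   [g \o S]; that [g \o S] is again a character follows from the uniqueness of
   inverses in the convolution monoid of [H ⊗ H].  Since [B_i] is a coalgebra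
   map, [f |-> f \o B_i] maps convolution to convolution, and since
   [B_i \o sigma = B_i], the map [f \o B_i] is determined by its values on [H_1].
   Hence if [f \o B_1 = (g k) \o B_1] with [k \o B_2 = eps], the character
   [m := g^-1 f k^-1] satisfies [m \o B_1 = eps] and [f \o B_2 = (g m) \o B_2].
   Applied symmetrically in [B_1] and [B_2] this shows that Theta is well
   defined and injective; multiplicativity is the case [k = eps] applied to
   [h] and [f g]. *)

Section Linearity.
Variable F : fieldType.

Section LinearMap.
Variables (U V : lmodType F) (f : U -> V).
Hypothesis f_lin : lin f.

Lemma lin0 : f 0 = 0.
Proof.
have := f_lin 1 0 0; rewrite !scale1r addr0 => f0D.
by apply: (addrI (f 0)); rewrite addr0 -f0D.
Qed.

Lemma linD x y : f (x + y) = f x + f y.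
Proof. by have := f_lin 1 x y; rewrite !scale1r. Qed.

Lemma linZ k x : f (k *: x) = k *: f x.
Proof. by have := f_lin k x 0; rewrite !addr0 lin0 addr0. Qed.

Lemma lin_sum I (r : seq I) (G : I -> U) :
  f (\sum_(i <- r) G i) = \sum_(i <- r) f (G i).
Proof. exact: (big_morph f linD lin0). Qed.

End LinearMap.

Lemma lin_sum_fun (U V : lmodType F) I (r : seq I) (G : I -> U -> V) :
  (forall i, lin (G i)) -> lin (fun x => \sum_(i <- r) G i x).
Proof.
move=> G_lin k x y; rewrite scaler_sumr -big_split.
by apply: eq_bigr => i _; apply: G_lin.
Qed.

Lemma lin_comp (U V W : lmodType F) (f : V -> W) (g : U -> V) :
  lin f -> lin g -> lin (fun x => f (g x)).
Proof. by move=> f_lin g_lin k x y; rewrite g_lin f_lin. Qed.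

Variable W : algType F.

Lemma lin_mulr (c : W) : lin (fun x => x * c).
Proof. by move=> k x y; rewrite mulrDl scalerAl. Qed.

Lemma lin_mull (c : W) : lin (fun x => c * x).
Proof. by move=> k x y; rewrite mulrDr scalerAr. Qed.

Variable H : algType F.

Lemma bilin_mul (u v : H -> W) : lin u -> lin v -> bilin (fun x y => u x * v y).
Proof.
move=> u_lin v_lin; split=> y; first exact: lin_comp (lin_mulr (v y)) u_lin.
exact: lin_comp (lin_mull (u y)) v_lin.
Qed.

Lemma trilin_mul (u v w : H -> W) :
  lin u -> lin v -> lin w -> trilin (fun x y z => u x * v y * w z).
Proof.
move=> u_lin v_lin w_lin; split; last split=> y z.
- move=> y z; exact: lin_comp (lin_mulr (w z)) (lin_comp (lin_mulr (v y)) u_lin).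
- exact: lin_comp (lin_mulr (w z)) (lin_comp (lin_mull (u y)) v_lin).
- exact: lin_comp (lin_mull (u y * v z)) w_lin.
Qed.

End Linearity.

Section HopfAlgebra.
Variables (F : fieldType) (H : algType F) (D : hopf_data H).
Hypothesis HD : cocomm_hopf D.

Local Notation sw := (sw D).
Local Notation eps := (cou D).
Local Notation S := (ant D).

Lemma cop_lin (W : lmodType F) (phi : H -> H -> W) :
  bilin phi -> lin (fun a => sw a phi).
Proof. by case: HD => swL _ phi_bilin k a b; apply: swL. Qed.

Lemma cou_lin k a b : eps (k *: a + b) = k * eps a + eps b.
Proof. by case: HD => _ [->]. Qed.

Lemma ant_lin : lin S.
Proof. by case: HD => _ [_ []]. Qed.

Lemma coassoc (W : lmodType F) (phi : H -> H -> H -> W) : trilin phi -> forall a,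
  sw a (fun x y => sw x (fun x1 x2 => phi x1 x2 y))
  = sw a (fun x y => sw y (fun y1 y2 => phi x y1 y2)).
Proof. by case: HD => _ [_ [_ [coassoc _]]]; apply: coassoc. Qed.

Lemma counitl a : sw a (fun x y => eps x *: y) = a.
Proof. by case: HD => _ [_ [_ [_ [/(_ a)[]]]]]. Qed.

Lemma counitr a : sw a (fun x y => eps y *: x) = a.
Proof. by case: HD => _ [_ [_ [_ [/(_ a)[]]]]]. Qed.

Lemma sw_mul (W : lmodType F) (phi : H -> H -> W) : bilin phi -> forall a b,
  sw (a * b) phi = sw a (fun x y => sw b (fun x' y' => phi (x * x') (y * y'))).
Proof. by case: HD => _ [_ [_ [_ [_ [cop_mul _]]]]] /cop_mul[]. Qed.

Lemma sw1 (W : lmodType F) (phi : H -> H -> W) : bilin phi -> sw 1 phi = phi 1 1.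
Proof. by case: HD => _ [_ [_ [_ [_ [cop_mul _]]]]] /cop_mul[]. Qed.

Lemma couM a b : eps (a * b) = eps a * eps b.
Proof. by case: HD => _ [_ [_ [_ [_ [_ [[]]]]]]]. Qed.

Lemma cou1 : eps 1 = 1.
Proof. by case: HD => _ [_ [_ [_ [_ [_ [[]]]]]]]. Qed.

Lemma antipodel a : sw a (fun x y => S x * y) = eps a *: 1.
Proof. by case: HD => _ [_ [_ [_ [_ [_ [_ [/(_ a)[]]]]]]]]. Qed.

Lemma antipoder a : sw a (fun x y => x * S y) = eps a *: 1.
Proof. by case: HD => _ [_ [_ [_ [_ [_ [_ [/(_ a)[]]]]]]]]. Qed.

Lemma sw_ext (W : zmodType) a (phi psi : H -> H -> W) :
  (forall x y, phi x y = psi x y) -> sw a phi = sw a psi.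
Proof. by move=> eq_phi; apply: eq_bigr => p _; apply: eq_phi. Qed.

Lemma sw_mulr (W : pzRingType) a (phi : H -> H -> W) c :
  sw a phi * c = sw a (fun x y => phi x y * c).
Proof. exact: big_distrl. Qed.

Lemma sw_mull (W : pzRingType) a (phi : H -> H -> W) c :
  c * sw a phi = sw a (fun x y => c * phi x y).
Proof. exact: big_distrr. Qed.

Lemma sw_scale (W : lmodType F) a (phi : H -> H -> W) k :
  k *: sw a phi = sw a (fun x y => k *: phi x y).
Proof. exact: scaler_sumr. Qed.

Lemma sw_exch (W : zmodType) a b (phi : H -> H -> H -> H -> W) :
  sw a (fun x y => sw b (phi x y)) = sw b (fun x' y' => sw a (fun x y => phi x y x' y')).
Proof. exact: exchange_big. Qed.

Lemma lin_sw_comm (V W : lmodType F) (f : V -> W) a (phi : H -> H -> V) :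
  lin f -> f (sw a phi) = sw a (fun x y => f (phi x y)).
Proof. by move=> f_lin; apply: lin_sum. Qed.

Lemma lin_sw (U W : lmodType F) a (Phi : U -> H -> H -> W) :
  (forall x y, lin (fun u => Phi u x y)) -> lin (fun u => sw a (Phi u)).
Proof. by move=> Phi_lin; apply: lin_sum_fun => p; apply: Phi_lin. Qed.

Lemma sw_counitl (W : lmodType F) (f : H -> W) a :
  lin f -> sw a (fun x y => eps x *: f y) = f a.
Proof.
move=> f_lin; rewrite -{2}(counitl a) (lin_sw_comm _ _ f_lin).
by apply: sw_ext => x y; rewrite (linZ f_lin).
Qed.

Lemma sw_counitr (W : lmodType F) (f : H -> W) a :
  lin f -> sw a (fun x y => eps y *: f x) = f a.
Proof.
move=> f_lin; rewrite -{2}(counitr a) (lin_sw_comm _ _ f_lin).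
by apply: sw_ext => x y; rewrite (linZ f_lin).
Qed.

Lemma ant1 : S 1 = 1.
Proof.
have := antipodel 1; rewrite (sw1 (bilin_mul ant_lin (fun k x y => erefl))).
by rewrite mulr1 cou1 scale1r.
Qed.

Variable A : comAlgType F.

Local Notation conv := (conv D).
Local Notation e := (conv_unit D A).

Definition conv_inv (g : H -> A) (a : H) : A := g (S a).

Lemma char_lin (f : H -> A) : is_char f -> lin f.
Proof. by case. Qed.

Lemma conv_lin (u v : H -> A) : lin u -> lin v -> lin (conv u v).
Proof. by move=> u_lin v_lin; apply/cop_lin/bilin_mul. Qed.

Lemma conv_unit_lin : lin e.
Proof. by move=> k a b; rewrite /conv_unit cou_lin scalerDl scalerA. Qed.

Lemma conv_inv_lin (g : H -> A) : lin g -> lin (conv_inv g).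
Proof. by move=> g_lin; apply: lin_comp g_lin ant_lin. Qed.

Hint Resolve char_lin conv_lin conv_unit_lin conv_inv_lin : core.

Section ConvolutionMonoid.
Variables u v w : H -> A.
Hypotheses (u_lin : lin u) (v_lin : lin v) (w_lin : lin w).

Lemma convA : conv (conv u v) w = conv u (conv v w).
Proof.
apply: functional_extensionality => a; rewrite /Defs.conv.
transitivity (sw a (fun x y => sw x (fun x1 x2 => u x1 * v x2 * w y))).
  by apply: sw_ext => x y; rewrite sw_mulr.
rewrite (coassoc (trilin_mul u_lin v_lin w_lin)).
by apply: sw_ext => x y; rewrite sw_mull; apply: sw_ext => y1 y2; rewrite mulrA.
Qed.

Lemma conv_unitl : conv e u = u.
Proof.
apply: functional_extensionality => a; rewrite -[RHS](sw_counitl a u_lin).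
by apply: sw_ext => x y; rewrite mulr_algl.
Qed.

Lemma conv_unitr : conv u e = u.
Proof.
apply: functional_extensionality => a; rewrite -[RHS](sw_counitr a u_lin).
by apply: sw_ext => x y; rewrite mulr_algr.
Qed.

End ConvolutionMonoid.

Lemma char_conv (u v : H -> A) : is_char u -> is_char v -> is_char (conv u v).
Proof.
case=> u_lin uM u1 [v_lin vM v1]; split; first exact: conv_lin.
  move=> a b; rewrite /Defs.conv (sw_mul (bilin_mul u_lin v_lin)) sw_mulr.
  apply: sw_ext => x y; rewrite sw_mull; apply: sw_ext => x' y'.
  by rewrite uM vM mulrACA.
by rewrite /Defs.conv (sw1 (bilin_mul u_lin v_lin)) u1 v1 mulr1.
Qed.

Lemma char_unit : is_char e.
Proof.
split=> [||]; first exact: conv_unit_lin.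
  by move=> a b; rewrite /conv_unit couM mulr_algl scalerA.
by rewrite /conv_unit cou1 scale1r.
Qed.

Section ConvolutionInverse.
Variable g : H -> A.
Hypothesis g_char : is_char g.

Lemma conv_invr : conv g (conv_inv g) = e.
Proof.
have [g_lin gM g1] := g_char; apply: functional_extensionality => a.
transitivity (g (sw a (fun x y => x * S y))).
  by rewrite (lin_sw_comm _ _ g_lin); apply: sw_ext => x y; rewrite gM.
by rewrite antipoder (linZ g_lin) g1.
Qed.

Lemma conv_invl : conv (conv_inv g) g = e.
Proof.
have [g_lin gM g1] := g_char; apply: functional_extensionality => a.
transitivity (g (sw a (fun x y => S x * y))).
  by rewrite (lin_sw_comm _ _ g_lin); apply: sw_ext => x y; rewrite gM.
by rewrite antipodel (linZ g_lin) g1.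
Qed.

End ConvolutionInverse.

(* A bilinear map [H -> H -> A] stands for a linear map on [H ⊗ H]; [conv2] is
   the convolution of [Hom(H ⊗ H, A)] and [unit2] its unit. *)
Definition conv2 (U V : H -> H -> A) (a b : H) : A :=
  sw a (fun x1 x2 => sw b (fun y1 y2 => U x1 y1 * V x2 y2)).

Definition unit2 (a b : H) : A := e a * e b.

Section BilinearConvolution.
Variables U V W : H -> H -> A.
Hypotheses (U_bilin : bilin U) (V_bilin : bilin V) (W_bilin : bilin W).

Lemma conv2_unitl : conv2 unit2 U = U.
Proof.
have [U_lin1 U_lin2] := U_bilin.
apply: functional_extensionality => a; apply: functional_extensionality => b.
transitivity (sw a (fun x1 x2 => eps x1 *: U x2 b)); last exact: sw_counitl.
apply: sw_ext => x1 x2; rewrite -(sw_counitl b (U_lin2 x2)) sw_scale.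
by apply: sw_ext => y1 y2; rewrite -mulrA !mulr_algl.
Qed.

Lemma conv2_unitr : conv2 U unit2 = U.
Proof.
have [U_lin1 U_lin2] := U_bilin.
apply: functional_extensionality => a; apply: functional_extensionality => b.
transitivity (sw a (fun x1 x2 => eps x2 *: U x1 b)); last exact: sw_counitr.
apply: sw_ext => x1 x2; rewrite -(sw_counitr b (U_lin2 x1)) sw_scale.
by apply: sw_ext => y1 y2; rewrite mulrA !mulr_algr scalerA mulrC -scalerA.
Qed.

Lemma conv2A : conv2 (conv2 U V) W = conv2 U (conv2 V W).
Proof.
have [U_lin1 U_lin2] := U_bilin; have [V_lin1 V_lin2] := V_bilin.
have [W_lin1 W_lin2] := W_bilin.
apply: functional_extensionality => a; apply: functional_extensionality => b.
transitivity (sw a (fun x x3 => sw x (fun x1 x2 => sw b (fun y y3 =>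
   sw y (fun y1 y2 => U x1 y1 * V x2 y2 * W x3 y3))))).
  apply: sw_ext => x x3; rewrite [RHS]sw_exch; apply: sw_ext => y y3.
  by rewrite sw_mulr; apply: sw_ext => x1 x2; rewrite sw_mulr.
transitivity (sw a (fun x x3 => sw x (fun x1 x2 => sw b (fun y1 y =>
   sw y (fun y2 y3 => U x1 y1 * V x2 y2 * W x3 y3))))).
  apply: sw_ext => x x3; apply: sw_ext => x1 x2.
  exact: coassoc (trilin_mul (U_lin2 x1) (V_lin2 x2) (W_lin2 x3)) b.
have T_trilin y1 y2 y3 := trilin_mul (U_lin1 y1) (V_lin1 y2) (W_lin1 y3).
rewrite coassoc; last first.
  split; [|split] => *; do 2!apply: lin_sw => *.
  - exact: (T_trilin _ _ _).1.
  - exact: (T_trilin _ _ _).2.1.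
  - exact: (T_trilin _ _ _).2.2.
apply: sw_ext => x1 x; rewrite sw_exch; apply: sw_ext => y1 y.
rewrite sw_mull; apply: sw_ext => x2 x3.
by rewrite sw_mull; apply: sw_ext => y2 y3; rewrite mulrA.
Qed.

End BilinearConvolution.

Lemma char_conv_inv (g : H -> A) : is_char g -> is_char (conv_inv g).
Proof.
move=> g_char; have [g_lin gM g1] := g_char.
have gS_lin := conv_inv_lin g_lin.
split=> //; last by rewrite /conv_inv ant1 g1.
pose P x y := conv_inv g (x * y).
pose R x y := g (x * y).
pose Q x y := conv_inv g x * conv_inv g y.
have P_bilin : bilin P.
  by split=> y; [apply: lin_comp gS_lin (lin_mulr y) | apply: lin_comp gS_lin (lin_mull y)].
have R_bilin : bilin R.
  by split=> y; [apply: lin_comp g_lin (lin_mulr y) | apply: lin_comp g_lin (lin_mull y)].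
have Q_bilin : bilin Q := bilin_mul gS_lin gS_lin.
have PR : conv2 P R = unit2.
  apply: functional_extensionality => x; apply: functional_extensionality => y.
  transitivity (conv (conv_inv g) g (x * y)).
    by rewrite /Defs.conv (sw_mul (bilin_mul gS_lin g_lin)).
  by rewrite conv_invl //; have [_ -> _] := char_unit.
have RQ : conv2 R Q = unit2.
  apply: functional_extensionality => x; apply: functional_extensionality => y.
  transitivity (conv g (conv_inv g) x * conv g (conv_inv g) y); last by rewrite conv_invr.
  rewrite /Defs.conv sw_mulr; apply: sw_ext => x1 x2; rewrite sw_mull.
  by apply: sw_ext => y1 y2; rewrite /R /Q gM mulrACA.
(* uniqueness of the inverse of [R] in the monoid [Hom(H ⊗ H, A)] *)
have PQ : P = Q by rewrite -[P]conv2_unitr // -RQ -conv2A // PR conv2_unitl.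
by move=> a b; have := congr1 (fun T => T a b) PQ.
Qed.

Section CoalgebraMorphism.
Variable B : H -> H.
Hypothesis B_hom : coalg_hom D B.

Lemma calB_lin (u : H -> A) : lin u -> lin (calB B u).
Proof. by have [B_lin _ _ _] := B_hom; move/lin_comp; apply. Qed.

Lemma calB_conv (u v : H -> A) : lin u -> lin v ->
  calB B (conv u v) = conv (calB B u) (calB B v).
Proof.
have [_ swB _ _] := B_hom => u_lin v_lin.
by apply: functional_extensionality => a; apply: swB (bilin_mul u_lin v_lin) a.
Qed.

Lemma calB_unit : calB B e = e.
Proof.
have [_ _ couB _] := B_hom.
by apply: functional_extensionality => a; rewrite /calB /conv_unit couB.
Qed.

Lemma calB_conv_inv_unit (k : H -> A) :
  is_char k -> calB B k = e -> calB B (conv_inv k) = e.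
Proof.
move=> k_char k_ker; rewrite -[LHS]conv_unitr; last exact/calB_lin/conv_inv_lin/char_lin.
by rewrite -{1}k_ker -calB_conv ?conv_invl ?calB_unit; auto.
Qed.

End CoalgebraMorphism.

Hint Resolve calB_lin char_conv char_conv_inv : core.

Lemma calB_conv_congr B (u u' v v' : H -> A) : coalg_hom D B ->
  lin u -> lin u' -> lin v -> lin v' ->
  calB B u = calB B u' -> calB B v = calB B v' ->
  calB B (conv u v) = calB B (conv u' v').
Proof. by move=> B_hom *; rewrite !calB_conv //; congr conv. Qed.

Lemma calB_coset_transfer Ba Bb (f g k : H -> A) :
  coalg_hom D Ba -> coalg_hom D Bb -> is_char f -> is_char g -> is_char k ->
  calB Bb k = e -> calB Ba f = calB Ba (conv g k) ->
  exists m, [/\ is_char m, calB Ba m = e & calB Bb f = calB Bb (conv g m)].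
Proof.
move=> Ba_hom Bb_hom f_char g_char k_char k_ker f_coset.
have [f_lin g_lin k_lin] := And3 (char_lin f_char) (char_lin g_char) (char_lin k_char).
exists (conv (conv (conv_inv g) f) (conv_inv k)); split; first by auto.
  have cancel_gk : conv (conv (conv_inv g) (conv g k)) (conv_inv k) = e.
    by rewrite -convA ?conv_invl ?conv_unitl ?conv_invr; auto.
  rewrite -[RHS](calB_unit Ba_hom) -cancel_gk.
  apply: calB_conv_congr; auto.
  apply: calB_conv_congr; auto.
have cancel_g : conv g (conv (conv (conv_inv g) f) (conv_inv k)) = conv f (conv_inv k).
  by rewrite -!convA ?conv_invr ?conv_unitl; auto.
rewrite cancel_g calB_conv ?(calB_conv_inv_unit Bb_hom) ?conv_unitr; auto.
Qed.

Section RotaBaxterSystem.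
Variables B1 B2 : H -> H.

Local Notation sigma := (sigma D B1 B2).
Local Notation eqH1 := (eqH1 D B1 B2).
Local Notation same_coset := (same_coset D B1 B2).

Lemma B_sigma B : coalg_hom D B -> (forall a b, B a * B b = B (circ D B1 B2 a b)) ->
  forall a, B (sigma a) = B a.
Proof.
case=> _ _ _ B_1 B_circ a.
have -> : sigma a = circ D B1 B2 a 1 by apply: sw_ext => x y; rewrite mulr1.
by rewrite -B_circ B_1 mulr1.
Qed.

Lemma eqH1_calB B : (forall a, B (sigma a) = B a) ->
  forall u v : H -> A, eqH1 (calB B u) (calB B v) <-> calB B u = calB B v.
Proof.
move=> B_sigma u v; split=> [uv | -> //]; apply: functional_extensionality => a.
by rewrite /calB -B_sigma; apply: uv; exists a.
Qed.

Lemma same_coset_of_eqH1 Bi Bj (x y : H -> A) :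
  coalg_hom D Bi -> coalg_hom D Bj -> lin y -> eqH1 x y -> same_coset Bi Bj x y.
Proof.
move=> Bi_hom Bj_hom y_lin xy; exists e; split.
  by split; [exact: char_unit | rewrite calB_unit].
by rewrite calB_unit // conv_unitr.
Qed.

Lemma same_coset_calB Bi Bj (f g : H -> A) :
  coalg_hom D Bi -> coalg_hom D Bj ->
  (forall a, Bi (sigma a) = Bi a) -> (forall a, Bj (sigma a) = Bj a) ->
  is_char f -> is_char g ->
  same_coset Bi Bj (calB Bi f) (calB Bi g) -> same_coset Bj Bi (calB Bj f) (calB Bj g).
Proof.
move=> Bi_hom Bj_hom Bi_sigma Bj_sigma f_char g_char [k [[k_char k_ker] f_coset]].
have {}k_ker : calB Bj k = e.
  by rewrite -(calB_unit Bj_hom); apply/(eqH1_calB Bj_sigma); rewrite calB_unit.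
have {}f_coset : calB Bi f = calB Bi (conv g k).
  by apply/(eqH1_calB Bi_sigma); rewrite calB_conv; auto.
have [m [m_char m_ker g_coset]] :=
  calB_coset_transfer Bi_hom Bj_hom f_char g_char k_char k_ker f_coset.
exists m; split; first split=> //.
  by rewrite -(calB_unit Bi_hom); apply/(eqH1_calB Bi_sigma); rewrite calB_unit.
by rewrite -calB_conv; auto; apply/(eqH1_calB Bj_sigma).
Qed.

End RotaBaxterSystem.
End HopfAlgebra.

Theorem mainTheorem13 (F : fieldType) (H : algType F) (D : hopf_data H)
    (B1 B2 : H -> H) (A : comAlgType F) :
  [pchar F] =i pred0 ->
  cocomm_hopf D ->
  rb_system D B1 B2 ->
  (forall f g : H -> A, is_char f -> is_char g ->
     same_coset D B1 B2 B1 B2 (calB B1 f) (calB B1 g)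
     <-> same_coset D B1 B2 B2 B1 (calB B2 f) (calB B2 g)) /\
  (forall f g h : H -> A, is_char f -> is_char g -> is_char h ->
     eqH1 D B1 B2 (calB B1 h) (conv D (calB B1 f) (calB B1 g)) ->
     same_coset D B1 B2 B2 B1 (calB B2 h) (conv D (calB B2 f) (calB B2 g))).
Proof.
move=> _ HD [B1_hom B2_hom B1_circ B2_circ].
have B1_sigma := B_sigma B1_hom B1_circ; have B2_sigma := B_sigma B2_hom B2_circ.
split=> [f g f_char g_char | f g h f_char g_char h_char h_coset].
  by split; apply: same_coset_calB.
have [f_lin g_lin] := (char_lin f_char, char_lin g_char).
rewrite -(calB_conv B1_hom f_lin g_lin) in h_coset.
rewrite -(calB_conv B2_hom f_lin g_lin).
apply: same_coset_calB => //; first exact: char_conv.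
apply: same_coset_of_eqH1 => //.
exact/(calB_lin B1_hom)/conv_lin.
Qed.
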